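(* Let $\mathbf{J}\in\mathbb{R}^{n\times n}$ be a real symmetric matrix with zero diagonal, and let $\alpha,\beta>0$ be such that $\lambda_{\min}(\mathbf{J}+\alpha\mathbf{I})>0$. Let $\mathcal{T}(\boldsymbol{x})=\varphi(\beta^{-1}(\mathbf{J}+\alpha\mathbf{I})\boldsymbol{x})$ with $\varphi$ the componentwise real cube root, let $\boldsymbol{x}^{(0)}\in\mathbb{R}^n$ be arbitrary, $\boldsymbol{x}^{(k+1)}=\mathcal{T}(\boldsymbol{x}^{(k)})$, and let $\boldsymbol{x}^*$ be the limit of $\{\boldsymbol{x}^{(k)}\}$. Suppose all components of $\boldsymbol{x}^*$ are nonzero and $\|\mathbf{J}_{\mathcal{T}}(\boldsymbol{x}^* )\|_2<1$, where $\mathbf{J}_{\mathcal{T}}$ denotes the Jacobian matrix of $\mathcal{T}$ and $\|\cdot\|_2$ the spectral norm (largest singular value). Then $\boldsymbol{x}^*$ is a strict local minimizer of $\mathcal{H}(\boldsymbol{x})=\frac{\beta}{4}\sum_i x_i^4-\frac{\alpha}{2}\sum_i x_i^2-\frac12\boldsymbol{x}^\top\mathbf{J}\boldsymbol{x}$.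
   Context: Under the stated hypotheses the iterates $\boldsymbol{x}^{(k)}$ (the DOCH iterates for minimizing $\mathcal{H}$) converge, so the limit $\boldsymbol{x}^*$ exists. *)

From HB Require Import structures.
From mathcomp Require Import all_boot all_order all_algebra.
From mathcomp Require Import all_classical all_reals all_analysis.
Set Implicit Arguments. Unset Strict Implicit. Unset Printing Implicit Defensive.
Import Order.TTheory GRing.Theory Num.Theory.
Import numFieldNormedType.Exports.
Local Open Scope classical_set_scope.
Local Open Scope ring_scope.

Definition cbrt {R : realType} (x : R) : R :=
  if 0 <= x then x `^ (3^-1) else - ((- x) `^ (3^-1)).

(* smallest eigenvalue (the set of eigenvalues of a real symmetric matrix
   is a nonempty finite set of reals when n > 0) *)
Definition lambda_min {R : realType} (n : nat) (M : 'M[R]_n) : R :=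
  inf [set a : R | eigenvalue M a].

(* spectral norm = largest singular value = sqrt of the largest eigenvalue of M^T M *)
Definition spectral_norm {R : realType} (n : nat) (M : 'M[R]_n) : R :=
  Num.sqrt (sup [set a : R | eigenvalue (M^T *m M) a]).

Definition Tmap {R : realType} (n : nat) (J : 'M[R]_n) (alpha beta : R)
  (x : 'cV[R]_n) : 'cV[R]_n :=
  map_mx cbrt (beta^-1 *: ((J + alpha%:M) *m x)).

Definition jacobianT {R : realType} (n : nat) (F : 'cV[R]_n -> 'cV[R]_n)
  (x : 'cV[R]_n) : 'M[R]_n :=
  \matrix_(i, j) (derive1 (fun t : R => F (x + t *: delta_mx j 0) i 0) 0).

Definition Hfun {R : realType} (n : nat) (J : 'M[R]_n) (alpha beta : R)
  (x : 'cV[R]_n) : R :=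
  beta / 4 * \sum_i (x i 0) ^+ 4 - alpha / 2 * \sum_i (x i 0) ^+ 2
  - 2^-1 * (x^T *m J *m x) 0 0.

Definition strict_local_min {R : realType} (n : nat) (f : 'cV[R]_n -> R)
  (x : 'cV[R]_n) : Prop :=
  \forall y \near x, y != x -> f x < f y.

From HB Require Import structures.
From mathcomp Require Import all_boot all_order all_algebra.
From mathcomp Require Import all_classical all_reals all_analysis.
From mathcomp Require Import ring lra.
Set Implicit Arguments. Unset Strict Implicit. Unset Printing Implicit Defensive.
Import Order.TTheory GRing.Theory Num.Theory.
Import numFieldNormedType.Exports.
Local Open Scope classical_set_scope.
Local Open Scope ring_scope.

(* Since the cube root is continuous, the limit [xs] is a fixed point of T,
   i.e. a critical point of H: beta xs_i^3 = ((J + alpha I) xs)_i.  There the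
   Jacobian of T is W^-1 (J + alpha I) with W = diag (3 beta xs_i^2), so the
   eigenvalues of the symmetric matrix W^-1/2 (J + alpha I) W^-1/2 are bounded by
   its spectral norm c < 1 (all spectral facts come from maximising the
   Rayleigh quotient over the compact unit sphere), whence h^T (J + alpha I) h <= c sum_i 3 beta xs_i^2 h_i^2.
   Expanding the quartic H exactly around [xs], H (xs + h) - H xs is then at
   least sum_i beta h_i^2 (3/2 (1 - c) xs_i^2 + xs_i h_i + h_i^2 / 4), and each
   term is positive as soon as 0 < |h_i| < 3/2 (1 - c) |xs_i|. *)

Lemma linear_coef_eq0 (R : realFieldType) (g p : R) :
  (forall t, 0 <= t * g + t ^+ 2 * p) -> g = 0.
Proof.
move=> ge0; pose q := `|p| + 1.
have q_gt0 : 0 < q by rewrite ltr_pwDr.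
have := ge0 (- g / q).
have -> : - g / q * g + (- g / q) ^+ 2 * p = - (g ^+ 2 / q ^+ 2) * (q - p).
  by field; rewrite gt_eqF.
have qp : 0 < q - p by rewrite subr_gt0 /q ltr_pwDr // ler_norm.
rewrite pmulr_lge0 // oppr_ge0 => g2.
apply/eqP; rewrite -sqrf_eq0 eq_le sqr_ge0 andbT.
by move: g2; rewrite pmulr_lle0 // invr_gt0 exprn_gt0.
Qed.

Section QuadraticForm.
Variables (R : realType) (n : nat).
Implicit Types (S M : 'M[R]_n) (v w : 'I_n -> R).

Lemma sum_empty_ord (F : 'I_n -> R) : n = 0%N -> \sum_i F i = 0.
Proof. by move=> n0; move: F; rewrite n0 => F; rewrite big_ord0. Qed.

Definition mulmxf M v i := \sum_j M i j * v j.
Definition qform S v := \sum_i \sum_j v i * S i j * v j.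
Definition sqnorm v := \sum_i v i ^+ 2.

Lemma qformE S v : qform S v = \sum_i v i * mulmxf S v i.
Proof.
apply: eq_bigr => i _; rewrite /mulmxf mulr_sumr.
by apply: eq_bigr => j _; rewrite mulrA.
Qed.

Lemma sqnorm_ge0 v : 0 <= sqnorm v.
Proof. by apply: sumr_ge0 => i _; rewrite sqr_ge0. Qed.

Lemma sqr_le_sqnorm v i : v i ^+ 2 <= sqnorm v.
Proof. by rewrite /sqnorm (bigD1 i) //= lerDl sumr_ge0 // => j _; rewrite sqr_ge0. Qed.

Lemma sqnorm_eq0 v : sqnorm v = 0 -> forall i, v i = 0.
Proof.
move=> v0 i; have := sqr_le_sqnorm v i; rewrite v0 => vi.
by apply/eqP; rewrite -sqrf_eq0 eq_le vi sqr_ge0.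
Qed.

Lemma sqnorm_gt0 v : (0 < sqnorm v) = [exists i, v i != 0].
Proof.
apply/idP/existsP => [v_gt0 | [i vi]].
  apply/existsP; apply: contraTT v_gt0 => /existsPn v0.
  rewrite -leNgt /sqnorm big1 // => i _.
  by move/negPn/eqP: (v0 i) => ->; rewrite expr0n.
rewrite lt_neqAle sqnorm_ge0 andbT eq_sym.
by apply: contra vi => /eqP/sqnorm_eq0 ->.
Qed.

Lemma qformZ S a v : qform S (fun i => a * v i) = a ^+ 2 * qform S v.
Proof.
rewrite /qform mulr_sumr; apply: eq_bigr => i _.
by rewrite mulr_sumr; apply: eq_bigr => j _; ring.
Qed.

Lemma sqnormZ a v : sqnorm (fun i => a * v i) = a ^+ 2 * sqnorm v.
Proof. by rewrite /sqnorm mulr_sumr; apply: eq_bigr => i _; ring. Qed.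

Lemma mulmxf_shift M a v i : mulmxf (M + a%:M) v i = mulmxf M v i + a * v i.
Proof.
rewrite /mulmxf (eq_bigr (fun j => M i j * v j + (a *+ (i == j)) * v j)); last first.
  by move=> j _; rewrite !mxE mulrDl.
rewrite big_split /=; congr (_ + _).
rewrite (bigD1 i) //= eqxx mulr1n big1 ?addr0 // => j /negbTE.
by rewrite eq_sym => ->; rewrite mul0r.
Qed.

Lemma qform_shift S a v : qform (S + a%:M) v = qform S v + a * sqnorm v.
Proof.
rewrite !qformE /sqnorm mulr_sumr -big_split /=.
by apply: eq_bigr => i _; rewrite mulmxf_shift; ring.
Qed.

Lemma qform_gram M v : qform (M^T *m M) v = sqnorm (mulmxf M v).
Proof.
rewrite /sqnorm /mulmxf.
under [RHS]eq_bigr do rewrite expr2 mulr_suml; rewrite exchange_big.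
apply: eq_bigr => i _; under [RHS]eq_bigr do rewrite mulr_sumr; rewrite exchange_big.
apply: eq_bigr => j _; rewrite !mxE mulr_sumr mulr_suml.
by apply: eq_bigr => k _; rewrite mxE; ring.
Qed.

Lemma continuous_qform S : continuous (fun r : 'rV[R]_n => qform S (fun i => r ord0 i)).
Proof.
apply: continuous_big => [|i _]; first exact: add_continuous.
apply: (@continuous_big _ _ +%R 0 xpredT) => [|j _]; first exact: add_continuous.
move=> r; apply: (@continuousM _ _ (fun r : 'rV[R]_n => r ord0 i * S i j) (fun r => r ord0 j)).
  apply: (@continuousM _ _ (fun r : 'rV[R]_n => r ord0 i) (fun=> S i j)).
    exact: coord_continuous.
  exact: cst_continuous.
exact: coord_continuous.
Qed.

Lemma continuous_sqnorm : continuous (fun r : 'rV[R]_n => sqnorm (fun i => r ord0 i)).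
Proof.
apply: continuous_big => [|i _]; first exact: add_continuous.
move=> r; rewrite /continuous_at; under eq_fun do rewrite expr2.
rewrite expr2; apply: (@continuousM _ _ (fun r : 'rV[R]_n => r ord0 i) (fun r => r ord0 i));
  exact: coord_continuous.
Qed.

Lemma qform_max_sphere S : (0 < n)%N ->
  exists2 c, sqnorm c = 1 & forall v, sqnorm v = 1 -> qform S v <= qform S c.
Proof.
move=> n_gt0.
pose sphere := [set v : 'rV[R]_n | sqnorm (fun i => v ord0 i) = 1].
have sphere0 : sphere !=set0.
  exists (\row_j ((j == Ordinal n_gt0)%:R : R)).
  rewrite /sphere /= /sqnorm (bigD1 (Ordinal n_gt0)) //= mxE eqxx expr1n big1 ?addr0 //.
  by move=> j /negbTE jn; rewrite mxE jn expr0n.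
have sphere_compact : compact sphere.
  have cube_compact :
      compact [set v : 'rV[R]_n | forall i, `[(-1 : R), 1]%classic (v ord0 i)].
    by apply: (@rV_compact _ _ (fun=> `[(-1 : R), 1]%classic)) => _; apply: segment_compact.
  apply: (subclosed_compact _ cube_compact).
  - apply: (@preimage_closed _ _ (fun v : 'rV[R]_n => sqnorm (fun i => v ord0 i)) [set 1]).
      by move=> v _; exact: continuous_sqnorm.
    exact: closed_eq.
  - move=> v sv i /=; have := sqr_le_sqnorm (fun i => v ord0 i) i; rewrite sv => vi.
    by rewrite in_itv /=; apply/andP; split; nra.
have [c sc cmax] := compact_EVT_max sphere0 sphere_compact
  (continuous_subspaceT (@continuous_qform S)).
exists (fun i => c ord0 i); first by move: sc; rewrite inE.
move=> v sv; have := cmax (\row_j v j); rewrite inE.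
have -> : (fun i => (\row_j v j) ord0 i) = v by apply/funext => i; rewrite mxE.
by apply; rewrite /sphere /= -sv; congr sqnorm; apply/funext => i; rewrite mxE.
Qed.

Lemma qform_le_max S c : sqnorm c = 1 ->
    (forall v, sqnorm v = 1 -> qform S v <= qform S c) ->
  forall v, qform S v <= qform S c * sqnorm v.
Proof.
move=> c1 cmax v; have [v0|v_neq0] := eqVneq (sqnorm v) 0.
  rewrite v0 mulr0 /qform big1 // => i _.
  by rewrite big1 // => j _; rewrite (sqnorm_eq0 v0 i) !mul0r.
have v_gt0 : 0 < sqnorm v by rewrite lt_neqAle eq_sym v_neq0 sqnorm_ge0.
pose s := Num.sqrt (sqnorm v).
have s_gt0 : 0 < s by rewrite sqrtr_gt0.
have s2 : s ^+ 2 = sqnorm v by rewrite sqr_sqrtr // ltW.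
have := cmax (fun i => s^-1 * v i).
rewrite qformZ sqnormZ exprVn s2 mulVf // => /(_ erefl).
by rewrite mulrC ler_pdivrMr.
Qed.

Section Symmetric.
Variable S : 'M[R]_n.
Hypothesis S_sym : forall i j, S i j = S j i.

Lemma qformD v w t : qform S (fun i => v i + t * w i)
  = qform S v + 2 * t * \sum_i w i * mulmxf S v i + t ^+ 2 * qform S w.
Proof.
have cross : \sum_i v i * mulmxf S w i = \sum_i w i * mulmxf S v i.
  rewrite /mulmxf; under eq_bigr do rewrite mulr_sumr.
  under [RHS]eq_bigr do rewrite mulr_sumr.
  rewrite exchange_big; apply: eq_bigr => i _; apply: eq_bigr => j _.
  by rewrite S_sym; ring.
have lin i : mulmxf S (fun j => v j + t * w j) i = mulmxf S v i + t * mulmxf S w i.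
  by rewrite /mulmxf mulr_sumr -big_split; apply: eq_bigr => j _ /=; ring.
have -> : 2 * t * \sum_i w i * mulmxf S v i
    = t * \sum_i w i * mulmxf S v i + t * \sum_i v i * mulmxf S w i.
  by rewrite cross; ring.
rewrite !qformE !mulr_sumr -!big_split /=.
by apply: eq_bigr => i _; rewrite lin; ring.
Qed.

Lemma sqnormD v w t : sqnorm (fun i => v i + t * w i)
  = sqnorm v + 2 * t * \sum_i w i * v i + t ^+ 2 * sqnorm w.
Proof. by rewrite /sqnorm !mulr_sumr -!big_split; apply: eq_bigr => i _ /=; ring. Qed.

(* Along [c + t e_i] the bound is a quadratic inequality in [t] that is tight
   at [t = 0], so its linear coefficient, the [i]-th entry of [S c - mu c],
   vanishes. *)
Lemma qform_bound_eigen c mu : sqnorm c = 1 -> qform S c = mu ->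
    (forall v, qform S v <= mu * sqnorm v) ->
  forall i, mulmxf S c i = mu * c i.
Proof.
move=> c1 qc bound i; pose e k : R := (k == i)%:R.
have sum_e f : \sum_k e k * f k = f i.
  by rewrite (bigD1 i) //= big1 => [|k /negbTE ki]; rewrite /e ?eqxx ?ki ?mul0r ?mul1r ?addr0.
apply/eqP; rewrite -subr_eq0; apply/eqP.
have -> : mulmxf S c i - mu * c i
    = \sum_k e k * mulmxf S c k - mu * \sum_k e k * c k by rewrite !sum_e.
apply: (linear_coef_eq0 (p := (mu * sqnorm e - qform S e) / 4)) => t.
have := bound (fun k => c k + (- t / 2) * e k).
by rewrite qformD sqnormD c1 qc => h; lra.
Qed.

Lemma rayleigh : (0 < n)%N -> exists mu w, [/\ sqnorm w = 1,
  forall i, mulmxf S w i = mu * w i & forall v, qform S v <= mu * sqnorm v].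
Proof.
move=> n_gt0; have [c c1 cmax] := qform_max_sphere S n_gt0.
exists (qform S c), c; split => //; last exact: qform_le_max.
by apply: qform_bound_eigen => //; exact: qform_le_max.
Qed.

Lemma row_mulmx_sym (r : 'rV[R]_n) k : (r *m S) ord0 k = mulmxf S (fun j => r ord0 j) k.
Proof. by rewrite mxE; apply: eq_bigr => j _; rewrite S_sym mulrC. Qed.

Lemma qform_le_sup_eigenvalue v : qform S v <= sup [set a | eigenvalue S a] * sqnorm v.
Proof.
have [n0|n_gt0] := posnP n.
  by rewrite /qform /sqnorm !sum_empty_ord ?mulr0.
have [mu [w [w1 Sw bound]]] := rayleigh n_gt0.
have mu_eig : eigenvalue S mu.
  apply/eigenvalueP; exists (\row_j w j).
    by apply/rowP => k; rewrite row_mulmx_sym !mxE -Sw; apply: eq_bigr => j _; rewrite mxE.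
  have : 0 < sqnorm w by rewrite w1 ltr01.
  rewrite sqnorm_gt0 => /existsP [j wj].
  by apply/eqP => /rowP/(_ j); rewrite !mxE; apply/eqP.
have mu_max : ubound [set a | eigenvalue S a] mu.
  move=> a /eigenvalueP [r rS r_neq0]; pose rv j := r ord0 j.
  have rv_gt0 : 0 < sqnorm rv.
    rewrite sqnorm_gt0; apply: contraR r_neq0 => /existsPn r0.
    by apply/eqP/rowP => j; rewrite mxE; apply/eqP/negPn/r0.
  have := bound rv; rewrite qformE.
  have -> : \sum_k rv k * mulmxf S rv k = a * sqnorm rv.
    rewrite /sqnorm mulr_sumr; apply: eq_bigr => k _.
    by rewrite -row_mulmx_sym rS !mxE /rv; ring.
  by rewrite ler_pM2r.
apply: le_trans (bound v) _; rewrite ler_wpM2r ?sqnorm_ge0 //.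
by apply: ub_le_sup => //; exists mu.
Qed.

End Symmetric.

Lemma sqnorm_mulmxf_le M v : sqnorm (mulmxf M v) <= spectral_norm M ^+ 2 * sqnorm v.
Proof.
have gram_sym i j : (M^T *m M) i j = (M^T *m M) j i.
  by rewrite !mxE; apply: eq_bigr => k _; rewrite !mxE mulrC.
rewrite -qform_gram; apply: le_trans (qform_le_sup_eigenvalue gram_sym v) _.
rewrite /spectral_norm; set s := sup _; have [s_ge0|s_lt0] := leP 0 s.
  by rewrite sqr_sqrtr.
apply: (@le_trans _ _ 0); last by rewrite mulr_ge0 ?sqr_ge0 ?sqnorm_ge0.
by rewrite nmulr_rle0 ?sqnorm_ge0.
Qed.

Section WeightedQuadraticBound.
Variables (A : 'M[R]_n) (w : 'I_n -> R) (c : R).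
Hypotheses (A_sym : forall i j, A i j = A j i) (w_gt0 : forall i, 0 < w i) (c_ge0 : 0 <= c).
Hypothesis A_contraction :
  forall v, sqnorm (fun i => (w i)^-1 * mulmxf A v i) <= c ^+ 2 * sqnorm v.

(* With [s_i = sqrt (w i)], a top eigenvector [e] of the symmetric matrix
   [A_ij / (s_i s_j)] gives the eigenvector [e_j / s_j] of [W^-1 A] for the same
   eigenvalue, which is therefore at most [c]. *)
Lemma qform_le_weighted h : qform A h <= c * \sum_i w i * h i ^+ 2.
Proof.
have [n0|n_gt0] := posnP n.
  by rewrite /qform !sum_empty_ord ?mulr0.
pose s i := Num.sqrt (w i).
have s_neq0 i : s i != 0 by rewrite gt_eqF // sqrtr_gt0.
have s2 i : s i ^+ 2 = w i by rewrite sqr_sqrtr // ltW.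
pose B := \matrix_(i, j) (A i j / (s i * s j)).
have B_sym i j : B i j = B j i by rewrite !mxE A_sym [s i * _]mulrC.
have [mu [e [e1 Be bound]]] := rayleigh B_sym n_gt0.
pose u j := e j / s j.
have Au i : (w i)^-1 * mulmxf A u i = mu * u i.
  have -> : mulmxf A u i = s i * mulmxf B e i.
    rewrite /mulmxf mulr_sumr; apply: eq_bigr => j _; rewrite mxE /u.
    by field; rewrite !s_neq0.
  by rewrite Be /u -s2; field; rewrite s_neq0.
have mu_le_c : mu <= c.
  have : 0 < sqnorm e by rewrite e1 ltr01.
  rewrite sqnorm_gt0 => /existsP [j ej].
  have u_gt0 : 0 < sqnorm u.
    by rewrite sqnorm_gt0; apply/existsP; exists j; rewrite mulf_neq0 ?invr_eq0.
  have := A_contraction u; rewrite (funext Au) sqnormZ ler_pM2r // => mu2.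
  case: (leP mu c) => // c_lt_mu; move: mu2; rewrite leNgt ltr_pXn2r ?c_lt_mu //.
  by rewrite nnegrE (le_trans c_ge0 (ltW c_lt_mu)).
have -> : qform A h = qform B (fun i => s i * h i).
  rewrite /qform; apply: eq_bigr => i _; apply: eq_bigr => j _; rewrite mxE.
  by field; rewrite !s_neq0.
have -> : \sum_i w i * h i ^+ 2 = sqnorm (fun i => s i * h i).
  by apply: eq_bigr => i _; rewrite -s2; ring.
by apply: le_trans (bound _) _; rewrite ler_wpM2r ?sqnorm_ge0.
Qed.

End WeightedQuadraticBound.

End QuadraticForm.

Section CubeRoot.
Variable R : realType.

Lemma cubeN (z : R) : (- z) ^+ 3 = - z ^+ 3.
Proof. by ring. Qed.

Lemma cbrtK : cancel (@cbrt R) (fun y => y ^+ 3).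
Proof.
have root3K (u : R) : 0 <= u -> (u `^ 3^-1) ^+ 3 = u.
  by move=> u0; rewrite -powR_mulrn ?powR_ge0 // -powRrM mulVf ?powRr1 // pnatr_eq0.
move=> u; rewrite /cbrt; case: ifPn => u0; first exact: root3K.
by rewrite cubeN root3K ?opprK // oppr_ge0 ltW // ltNge.
Qed.

Lemma expr3K : cancel (fun y : R => y ^+ 3) cbrt.
Proof.
have exp3K (y : R) : 0 <= y -> (y ^+ 3) `^ 3^-1 = y.
  by move=> y0; rewrite -powR_mulrn // -powRrM mulfV ?powRr1 // pnatr_eq0.
move=> y; rewrite /cbrt; case: (lerP 0 y) => [y_ge0|y_lt0].
  by rewrite exprn_ge0 // exp3K.
have y3_lt0 : y ^+ 3 < 0 by rewrite -oppr_gt0 -cubeN exprn_gt0 // oppr_gt0.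
by rewrite leNgt y3_lt0 /= -cubeN exp3K ?opprK // oppr_ge0 ltW.
Qed.

Lemma continuous_cbrt : continuous (@cbrt R).
Proof.
move=> u; rewrite -[u]cbrtK.
have cube_inverse := @near_can_continuous R (fun y => y ^+ 3) cbrt (cbrt u).
apply: (nbhs_singleton (cube_inverse _ _)).
- by near=> y; exact: expr3K.
- by near=> y; exact: exprn_continuous.
Unshelve. all: by end_near. Qed.

Lemma is_derive_cbrt (y : R) : y != 0 ->
  is_derive (y ^+ 3) 1 (@cbrt R) ((3 * y ^+ 2)^-1).
Proof.
move=> y0; apply: (@is_derive_inverse R (fun y => y ^+ 3) cbrt).
- by near=> z; exact: expr3K.
- by near=> z; exact: exprn_continuous.
- by have := is_deriveX 3 (is_derive_id y 1); rewrite /= scaler1.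
- by rewrite mulf_neq0 // ?pnatr_eq0 // expf_neq0.
Unshelve. all: by end_near. Qed.

End CubeRoot.

Lemma quartic_gap_gt0 (R : realFieldType) (beta c a h : R) : 0 < beta ->
    `|h| < 3 / 2 * (1 - c) * `|a| -> h != 0 ->
  0 < beta / 4 * (6 * a ^+ 2 * h ^+ 2 + 4 * a * h ^+ 3 + h ^+ 4)
      - 2^-1 * (c * (3 * beta * a ^+ 2 * h ^+ 2)).
Proof.
move=> beta_gt0 h_small h_neq0.
have -> : beta / 4 * (6 * a ^+ 2 * h ^+ 2 + 4 * a * h ^+ 3 + h ^+ 4)
      - 2^-1 * (c * (3 * beta * a ^+ 2 * h ^+ 2))
    = beta * h ^+ 2 * (3 / 2 * (1 - c) * a ^+ 2 + a * h + h ^+ 2 / 4) by field.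
apply: mulr_gt0; first by rewrite mulr_gt0 // exprn_even_gt0.
have ah_ge : - (`|a| * `|h|) <= a * h.
  by rewrite -normrM lerNl -normrN (le_trans (ler_norm _)) // normrN.
have bound_gt0 : 0 < 3 / 2 * (1 - c) * `|a| := le_lt_trans (normr_ge0 h) h_small.
have a_gt0 : 0 < `|a|.
  rewrite lt_neqAle normr_ge0 andbT eq_sym; apply: contraTneq bound_gt0 => ->.
  by rewrite mulr0 ltxx.
have : `|a| * `|h| < 3 / 2 * (1 - c) * a ^+ 2.
  have -> : 3 / 2 * (1 - c) * a ^+ 2 = `|a| * (3 / 2 * (1 - c) * `|a|).
    by rewrite -real_normK ?num_real //; ring.
  by rewrite ltr_pM2l.
have := sqr_ge0 h; lra.
Qed.

Section Energy.
Variables (R : realType) (n : nat) (J : 'M[R]_n) (alpha beta : R).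
Hypotheses (J_sym : forall i j, J i j = J j i) (beta_gt0 : 0 < beta).
Local Notation A := (J + alpha%:M).

Lemma shift_sym i j : A i j = A j i.
Proof. by rewrite !mxE J_sym eq_sym. Qed.

Lemma Tmap_coord y i :
  Tmap J alpha beta y i 0 = cbrt (beta^-1 * mulmxf A (fun j => y j 0) i).
Proof. by rewrite /Tmap !mxE. Qed.

Lemma Tmap_limit_critical (x : nat -> 'cV[R]_n) (xs : 'cV[R]_n) :
    (forall k, x k.+1 = Tmap J alpha beta (x k)) -> x @ \oo --> xs ->
  forall i, beta * xs i 0 ^+ 3 = mulmxf A (fun j => xs j 0) i.
Proof.
move=> x_rec x_cvg i.
have coord_cvg j : (fun k => x k j 0) @ \oo --> xs j 0.
  exact: (cvg_comp _ _ x_cvg (@coord_continuous R n 1 j 0 xs)).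
have shift_cvg : (fun k => x k.+1 i 0) @ \oo --> xs i 0.
  by rewrite (cvg_shiftS (fun k => x k i 0)).
have Tmap_cvg : (fun k => x k.+1 i 0) @ \oo
    --> cbrt (beta^-1 * mulmxf A (fun j => xs j 0) i).
  under eq_fun do rewrite x_rec Tmap_coord.
  apply: continuous_cvg; first exact: continuous_cbrt.
  apply: cvgM; first exact: cvg_cst.
  apply: cvg_big => [|j _]; first exact: add_continuous.
  by apply: cvgM; [exact: cvg_cst | exact: coord_cvg].
have fixed : xs i 0 = cbrt (beta^-1 * mulmxf A (fun j => xs j 0) i).
  exact: (cvg_unique _ shift_cvg Tmap_cvg).
by rewrite {1}fixed cbrtK mulrA mulfV ?gt_eqF // mul1r.
Qed.

Lemma Hfun_qform y : Hfun J alpha beta y = beta / 4 * \sum_i y i 0 ^+ 4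
  - alpha / 2 * \sum_i y i 0 ^+ 2 - 2^-1 * qform J (fun i => y i 0).
Proof.
rewrite /Hfun; congr (_ - _ * _).
rewrite mxE /qform exchange_big; apply: eq_bigr => j _; rewrite !mxE mulr_suml.
by apply: eq_bigr => i _; rewrite mxE.
Qed.

Section CriticalPoint.
Variable xs : 'cV[R]_n.
Hypothesis xs_critical : forall i, beta * xs i 0 ^+ 3 = mulmxf A (fun j => xs j 0) i.

Lemma jacobianT_Tmap i j : xs i 0 != 0 ->
  jacobianT (Tmap J alpha beta) xs i j = (3 * beta * xs i 0 ^+ 2)^-1 * A i j.
Proof.
move=> xs_i_neq0; rewrite /jacobianT mxE.
pose slope := beta^-1 * A i j.
have -> : (fun t => Tmap J alpha beta (xs + t *: delta_mx j 0) i 0)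
    = (fun t => cbrt (xs i 0 ^+ 3 + t * slope)).
  apply/funext => t; rewrite Tmap_coord; congr cbrt.
  have -> : mulmxf A (fun k => (xs + t *: delta_mx j 0) k 0) i
      = mulmxf A (fun k => xs k 0) i + t * A i j.
    rewrite /mulmxf (eq_bigr (fun k => A i k * xs k 0 + t * (A i k * (k == j)%:R))).
      rewrite big_split /= -mulr_sumr; congr (_ + t * _).
      rewrite (bigD1 j) //= eqxx mulr1 big1 ?addr0 //.
      by move=> k /negbTE ->; rewrite mulr0.
    by move=> k _; rewrite !mxE eqxx andbT; ring.
  rewrite -xs_critical mulrDr mulrA mulVf ?gt_eqF // mul1r /slope; ring.
have line_derive : is_derive (0 : R) 1 (fun t : R => xs i 0 ^+ 3 + t * slope) slope.
  by apply: is_derive_eq; rewrite add0r mul1r scaler0 add0r -[RHS]mulr1.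
have cbrt_derive : is_derive (0 : R) 1 (fun t => cbrt (xs i 0 ^+ 3 + t * slope))
    ((3 * xs i 0 ^+ 2)^-1 * slope).
  apply: (is_derive1_comp (g := fun t => xs i 0 ^+ 3 + t * slope)).
  by rewrite mul0r addr0; exact: is_derive_cbrt.
rewrite derive1E derive_val /slope.
by field; rewrite xs_i_neq0 gt_eqF.
Qed.

Lemma Hfun_expansion y : Hfun J alpha beta y - Hfun J alpha beta xs =
  \sum_i beta / 4 * (6 * xs i 0 ^+ 2 * (y i 0 - xs i 0) ^+ 2
                     + 4 * xs i 0 * (y i 0 - xs i 0) ^+ 3 + (y i 0 - xs i 0) ^+ 4)
  - 2^-1 * qform A (fun i => y i 0 - xs i 0).
Proof.
pose a i := xs i 0; pose h i := y i 0 - xs i 0.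
rewrite !Hfun_qform.
have -> : (fun i => y i 0) = (fun i => a i + 1 * h i).
  by apply/funext => i; rewrite /a /h; ring.
rewrite qformD // qform_shift.
have Ja i : mulmxf J a i = beta * a i ^+ 3 - alpha * a i.
  by rewrite /a xs_critical mulmxf_shift; ring.
have quartic : \sum_i y i 0 ^+ 4 = \sum_i xs i 0 ^+ 4 + 4 * \sum_i a i ^+ 3 * h i
    + \sum_i (6 * a i ^+ 2 * h i ^+ 2 + 4 * a i * h i ^+ 3 + h i ^+ 4).
  by rewrite mulr_sumr -!big_split; apply: eq_bigr => i _ /=; rewrite /a /h; ring.
have quadratic : \sum_i y i 0 ^+ 2 = \sum_i xs i 0 ^+ 2 + 2 * \sum_i a i * h i + sqnorm h.
  by rewrite mulr_sumr -!big_split; apply: eq_bigr => i _ /=; rewrite /a /h; ring.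
have cross : \sum_i h i * mulmxf J a i
    = beta * \sum_i a i ^+ 3 * h i - alpha * \sum_i a i * h i.
  by rewrite !mulr_sumr -sumrB; apply: eq_bigr => i _; rewrite Ja; ring.
by rewrite quartic quadratic cross -mulr_sumr; field.
Qed.

Lemma Hfun_strict_local_min c : (forall i, xs i 0 != 0) -> c < 1 ->
    (forall h, qform A h <= c * \sum_i 3 * beta * xs i 0 ^+ 2 * h i ^+ 2) ->
  strict_local_min (Hfun J alpha beta) xs.
Proof.
move=> xs_neq0 c_lt1 A_bound.
pose r i := 3 / 2 * (1 - c) * `|xs i 0|.
have r_gt0 i : 0 < r i by rewrite !mulr_gt0 ?normr_gt0 ?subr_gt0.
have near_xs : \forall y \near xs, forall i, `|xs i 0 - (y : 'cV[R]_n) i 0| < r i.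
  apply: (@filter_forall _ _ (fun i (y : 'cV[R]_n) => `|xs i 0 - y i 0| < r i)
    (nbhs xs) _) => i.
  exact: cvgr_dist_lt _ _ (@coord_continuous R n 1 i 0 xs) _ (r_gt0 i).
apply: filterS near_xs => y y_near y_neq_xs.
pose h i := y i 0 - xs i 0.
pose gap i := beta / 4 * (6 * xs i 0 ^+ 2 * h i ^+ 2 + 4 * xs i 0 * h i ^+ 3 + h i ^+ 4)
  - 2^-1 * (c * (3 * beta * xs i 0 ^+ 2 * h i ^+ 2)).
have gap_gt0 i : h i != 0 -> 0 < gap i.
  by apply: quartic_gap_gt0; rewrite // distrC; exact: y_near.
have gap_ge0 i : 0 <= gap i.
  have [h0|/gap_gt0/ltW //] := eqVneq (h i) 0.
  by rewrite /gap h0 !expr0n /= !(mulr0, mul0r, addr0) subrr.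
have [i h_neq0] : exists i, h i != 0.
  apply/existsP; apply: contraR y_neq_xs => /existsPn h0.
  apply/eqP/matrixP => i j; rewrite (ord1 j).
  by move: (h0 i); rewrite negbK subr_eq0 => /eqP.
rewrite -subr_gt0 Hfun_expansion; apply: (@lt_le_trans _ _ (\sum_i gap i)).
  rewrite (bigD1 i) //= ltr_pwDl ?gap_gt0 //.
  by apply: sumr_ge0 => k _; exact: gap_ge0.
rewrite /gap sumrB -mulr_sumr lerD2l lerN2 -mulr_sumr ler_wpM2l ?invr_ge0 //.
by rewrite -mulr_sumr; exact: A_bound.
Qed.

End CriticalPoint.

End Energy.

Theorem propositionS11 (R : realType) (n : nat) (J : 'M[R]_n) (alpha beta : R)
  (x : nat -> 'cV[R]_n) (xstar : 'cV[R]_n) :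
  J^T = J ->
  (forall i, J i i = 0) ->
  0 < alpha -> 0 < beta ->
  0 < lambda_min (J + alpha%:M) ->
  (forall k, x k.+1 = Tmap J alpha beta (x k)) ->
  x @ \oo --> xstar ->
  (forall i, xstar i 0 != 0) ->
  spectral_norm (jacobianT (Tmap J alpha beta) xstar) < 1 ->
  strict_local_min (Hfun J alpha beta) xstar.
Proof.
(* The zero diagonal, [0 < alpha] and the [lambda_min] hypothesis only serve in
   the paper to make the iteration converge; here convergence is assumed. *)
move=> J_tr _ _ beta_gt0 _ x_rec x_cvg xs_neq0 jac_lt1.
have J_sym i j : J i j = J j i by rewrite -{1}J_tr mxE.
have xs_critical := Tmap_limit_critical beta_gt0 x_rec x_cvg.
apply: (Hfun_strict_local_min J_sym beta_gt0 xs_critical xs_neq0 jac_lt1).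
have weight_gt0 i : 0 < 3 * beta * xstar i 0 ^+ 2.
  by apply: mulr_gt0; [rewrite mulr_gt0 ?ltr0n | rewrite exprn_even_gt0 ?xs_neq0].
have norm_ge0 : 0 <= spectral_norm (jacobianT (Tmap J alpha beta) xstar) := sqrtr_ge0 _.
apply: (qform_le_weighted (shift_sym alpha J_sym) weight_gt0 norm_ge0) => v.
have := sqnorm_mulmxf_le (jacobianT (Tmap J alpha beta) xstar) v.
congr (sqnorm _ <= _); apply/funext => i; rewrite /mulmxf mulr_sumr.
by apply: eq_bigr => j _; rewrite (jacobianT_Tmap beta_gt0 xs_critical) ?xs_neq0 ?mulrA.
Qed.
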